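(* Let $(S,\delta)$ be a dihedral set, $S'\subset S$ a subset with $|S'|\ge3$, $\delta'$ the induced dihedral structure on $S'$, and $f:\mathcal M_{0,S}\to\mathcal M_{0,S'}$ the forgetful map. Then: (1) for every chord $c'$ of $(S',\delta')$, $f^*(\omega_{c'})=\sum_{c\leadsto c'}\omega_c$ in $H^1(\mathcal M_{0,S})$, the sum over chords $c$ of $(S,\delta)$ with $c\leadsto c'$; (2) $f^*:H^\bullet(\mathcal M_{0,S'})\to H^\bullet(\mathcal M_{0,S})$ is compatible with the residual filtrations: it maps the span of monomials in the $\omega_{c'}$ with at most $r$ residual chords into the span of monomials in the $\omega_c$ with at most $r$ residual chords, for every $r$.
   Context: Dihedral set: finite $S$, $|S|=n\ge3$, identified with the sides of an unoriented $n$-gon up to dihedral symmetry; chords are pairs of non-consecutive vertices. The polygon $(S',\delta')$ is obtained from $(S,\delta)$ by contracting the sides not in $S'$; this maps vertices of $(S,\delta)$ onto vertices of $(S',\delta')$, and for a chord $c$ of $(S,\delta)$ and a chord $c'$ of $(S',\delta')$ one writes $c\leadsto c'$ if the endpoints of $c$ are sent to the endpoints of $c'$. $\mathcal M_{0,S}$ is the moduli space of $S$-indexed distinct points on $\mathbb P^1(\mathbb C)$ modulo $\mathrm{PGL}_2(\mathbb C)$; $f$ forgets the points indexed by $S\setminus S'$. For a chord $c$, $\omega_c=\frac1{2\pi i}d\log u_c$ where $u_c$ is Brown's dihedral coordinate (sides labelled $1..n$ in dihedral order, $c$ joining the vertex between sides $i,i+1$ to that between $j,j+1$: $u_c=\frac{(z_i-z_{j+1})(z_{i+1}-z_j)}{(z_i-z_j)(z_{i+1}-z_{j+1})}$);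 the classes $\omega_c$ generate the rational cohomology algebra of $\mathcal M_{0,S}$. A chord $c_i$ is residual in a set $\{c_1,\dots,c_k\}$ if no other $c_j$ crosses it (intersects it in the interior of the polygon). *)

From HB Require Import structures.
From mathcomp Require Import all_boot all_order all_algebra.
From mathcomp Require Import complex Rstruct.
Set Implicit Arguments. Unset Strict Implicit. Unset Printing Implicit Defensive.
Import Order.TTheory GRing.Theory Num.Theory.
Local Open Scope ring_scope.

Definition CC : numClosedFieldType := (Rdefinitions.R)[i].

(* Dihedral structure.  The dihedral set S is 'I_n with its standard cyclic *)
(* order 0,1,...,n-1.  A sub-polygon is given by a set P of sides (P = setT *)
(* for (S,delta), P = S' for (S',delta')) with the induced dihedral order.  *)
(* Vertices of the polygon P are labelled by elements s of P: vertex s is   *)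
(* the vertex between side s and the next side of P (cyclically).           *)

Definition nextP n (P : {set 'I_n}) (s : 'I_n) : 'I_n :=
  head s [seq t <- [seq iter k.+1 (@ordS n) s | k <- iota 0 n] | t \in P].

(* the last side of P at or before k, cyclically: the vertex of the big
   polygon between sides k and k+1 is sent, by contracting the sides not in
   P, to the vertex of P labelled prevP P k. *)
Definition prevP n (P : {set 'I_n}) (k : 'I_n) : 'I_n :=
  head k [seq t <- [seq iter m (@ord_pred n) k | m <- iota 0 n] | t \in P].

(* A chord of P: a pair (a,b), a < b (to count unordered pairs once), of
   distinct non-consecutive vertices of P. *)
Definition isChord n (P : {set 'I_n}) (c : 'I_n * 'I_n) : bool :=
  [&& c.1 \in P, c.2 \in P, (c.1 < c.2)%N, c.2 != nextP P c.1
      & c.1 != nextP P c.2].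

Definition leadsto n (P : {set 'I_n}) (c c' : 'I_n * 'I_n) : bool :=
  [set prevP P c.1; prevP P c.2] == [set c'.1; c'.2].

(* Two chords cross in the interior of the polygon (vertex labels are
   increasing along the boundary). *)
Definition crosses n (c d : 'I_n * 'I_n) : bool :=
  let btw x := ((c.1 < x) && (x < c.2))%N in
  [&& c.1 != d.1, c.1 != d.2, c.2 != d.1, c.2 != d.2 & btw d.1 (+) btw d.2].

Definition nresidual n (cs : seq ('I_n * 'I_n)) : nat :=
  count (fun c => ~~ has (crosses c) (undup cs)) (undup cs).

(* Holomorphic differential forms on the configuration space of n distinct  *)
(* points z_0,...,z_{n-1} of C, written in the basis dz_I (I increasing).   *)
(* The value at a point of a form is an element of the exterior algebra     *)
(* Lambda(C^n), encoded as a finite function {set 'I_n} -> C.               *)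

Definition ext n := {ffun {set 'I_n} -> CC}.

(* number of pairs (j,k) with j in J, k in K, k < j: the sign of
   dz_J /\ dz_K = (-1)^inv dz_(J u K). *)
Definition ninv n (J K : {set 'I_n}) : nat :=
  #|[set p : 'I_n * 'I_n | (p.1 \in J) && (p.2 \in K) && (p.2 < p.1)%N]|.

Definition wedge n (a b : ext n) : ext n :=
  [ffun I : {set 'I_n} => \sum_(J : {set 'I_n} | J \subset I)
               (-1) ^+ ninv J (I :\: J) * a J * b (I :\: J)].

Definition ext1 n : ext n := [ffun I : {set 'I_n} => (I == set0)%:R].

(* a differential form on Conf_n(C): a function from points to Lambda(C^n);
   only its values at configurations of distinct points matter. *)
Definition dform n := ('I_n -> CC) -> ext n.

Definition form_wedge n (a b : dform n) : dform n := fun z => wedge (a z) (b z).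
Definition form1 n : dform n := fun _ => ext1 n.

(* d log (z_a - z_b) = (dz_a - dz_b) / (z_a - z_b) *)
Definition dlogdiff n (a b : 'I_n) : dform n := fun z =>
  [ffun I : {set 'I_n} => if I == [set a] then (z a - z b)^-1
             else if I == [set b] then - (z a - z b)^-1 else 0].

(* Brown's dihedral coordinate of the chord c = (i,j) of the polygon P:
   u_c = (z_i - z_{j+1})(z_{i+1} - z_j) / ((z_i - z_j)(z_{i+1} - z_{j+1})),
   where i+1 denotes the next side of P.  omega P c = d log u_c
   (the normalising constant 1/(2 pi i) is dropped). *)
Definition omega n (P : {set 'I_n}) (c : 'I_n * 'I_n) : dform n := fun z =>
  let i := c.1 in let j := c.2 in
  let i1 := nextP P i in let j1 := nextP P j in
  [ffun I : {set 'I_n} => dlogdiff i j1 z I + dlogdiff i1 j z I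
             - dlogdiff i j z I - dlogdiff i1 j1 z I].

Definition monomial n (P : {set 'I_n}) (cs : seq ('I_n * 'I_n)) : dform n :=
  foldr (fun c m => form_wedge (omega P c) m) (@form1 n) cs.

Definition resmonom n (P : {set 'I_n}) (r : nat) (m : dform n) : Prop :=
  exists cs : seq ('I_n * 'I_n),
    [/\ all (isChord P) cs, (nresidual cs <= r)%N & m = monomial P cs].

Definition in_Qspan n (M : dform n -> Prop) (x : dform n) : Prop :=
  exists l : seq (rat * dform n),
    (forall p, List.In p l -> M p.2) /\
    forall z : 'I_n -> CC, injective z ->
      x z = [ffun I : {set 'I_n} => \sum_(p <- l) ratr p.1 * p.2 z I].

From HB Require Import structures.
From mathcomp Require Import all_boot all_order all_algebra.
From mathcomp Require Import complex Rstruct.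
From mathcomp Require Import zify ring.
Set Implicit Arguments. Unset Strict Implicit. Unset Printing Implicit Defensive.
Import Order.TTheory GRing.Theory Num.Theory.

(* Write omega_c as a combination of the forms dlog (z_x - z_y).  Contracting
   the sides outside S' sends the block of vertices lying between two
   consecutive sides of S' onto one vertex of S', so the chords c ~> (a, b) are
   the pairs (x, y) with x in the block of a and y in the block of b.  Blocks
   are cyclic intervals, and summing omega_(x, y) over both of them telescopes
   twice to omega_(a, b); this is (1).
   For (2), substitute (1) into a monomial in the omega_c' of S': it becomes
   the sum of the monomials omega_c1 /\ ... /\ omega_ck over all lifts
   c_i ~> c'_i.  Monomials with a repeated chord vanish, so the c'_i may be
   taken distinct, and then so are the c_i.  If c'_i and c'_j cross then so
   do c_i and c_j (contraction preserves the cyclic order of the endpoints),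
   hence a residual c_i contracts to a residual c'_i and lifting does not
   increase the number of residual chords. *)

Lemma head_filter_nth (T : Type) (d : T) (p : pred T) (s : seq T) :
  head d (filter p s) = nth d s (find p s).
Proof. by elim: s => //= x s IH; case: (p x). Qed.

Lemma least_index_unique (T : Type) (f : nat -> T) (p : pred T) a b :
  p (f a) -> p (f b) -> (forall j, j < a -> ~~ p (f j)) ->
  (forall j, j < b -> ~~ p (f j)) -> a = b.
Proof.
move=> pa pb ma mb; case: (ltngtP a b) => // h.
- by move: (mb _ h); rewrite pa.
- by move: (ma _ h); rewrite pb.
Qed.

Lemma head_filter_iota (T : Type) (d : T) (f : nat -> T) (p : pred T) n :
  (exists2 m, m < n & p (f m)) ->
  exists m, [/\ m < n, p (f m), (forall j, j < m -> ~~ p (f j)) &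
     head d (filter p (map f (iota 0 n))) = f m].
Proof.
move=> [m0 m0n pm0].
have exm : exists m, (m < n) && p (f m) by exists m0; rewrite m0n pm0.
case: (ex_minnP exm) => m /andP[mn pm] minm.
have before_m j : j < m -> ~~ p (f j).
  move=> jm; apply/negP => pj.
  by have := minm j; rewrite pj (ltn_trans jm mn) leqNgt jm => /(_ isT).
have nth_fiota j : j < n -> nth d (map f (iota 0 n)) j = f j.
  by move=> jn; rewrite (nth_map 0) ?size_iota // nth_iota.
have find_lt : find p (map f (iota 0 n)) < n.
  rewrite -[n in _ < n](size_iota 0) -(size_map f) -has_find has_map.
  by apply/hasP; exists m; rewrite ?mem_iota.
exists m; split => //; rewrite head_filter_nth.
suff -> : find p (map f (iota 0 n)) = m by rewrite nth_fiota.
apply: (least_index_unique (f := f) (p := p)) => //.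
- by rewrite -nth_fiota // nth_find // has_find size_map size_iota.
- by move=> j jf; rewrite -nth_fiota ?before_find // (ltn_trans jf find_lt).
Qed.

Section CyclicOrder.

Variable n : nat.
Implicit Types s t : 'I_n.

Lemma iter_ordS_val s k : val (iter k (@ordS n) s) = (s + k) %% n.
Proof.
elim: k => [|k IH] /=; first by rewrite addn0 modn_small.
by rewrite IH -addn1 modnDml addn1 addnS.
Qed.

Lemma iter_ordS_period s : iter n (@ordS n) s = s.
Proof. by apply: val_inj; rewrite iter_ordS_val modnDr modn_small. Qed.

Lemma iter_ordS_neq s k : 0 < k < n -> iter k (@ordS n) s != s.
Proof.
case/andP=> k0 kn; apply/eqP => /(congr1 val)/eqP.
rewrite iter_ordS_val -[X in _ == X](modn_small (ltn_ord s)).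
rewrite -[X in _ == X %% _]addn0 eqn_modDl mod0n modn_small //.
by rewrite eqn0Ngt k0.
Qed.

Lemma iter_ordS_onto s t : exists2 k, k < n & iter k (@ordS n) s = t.
Proof.
have n0 : 0 < n by case: n s t => [[]|].
exists ((t + n - s) %% n); first by rewrite ltn_mod.
apply: val_inj; rewrite iter_ordS_val /= modnDmr.
have sn := ltn_ord s; have tn := ltn_ord t.
have -> : s + (t + n - s) = t + n by lia.
by rewrite modnDr modn_small.
Qed.

Lemma iter_ordS_pred s j k : j <= k ->
  iter j (@ordS n) (iter k (@ord_pred n) s) = iter (k - j) (@ord_pred n) s.
Proof.
elim: j => [|j IH] jk; first by rewrite subn0.
rewrite iterS IH ?(ltnW jk) //.
have -> : k - j = (k - j.+1).+1 by lia.
by rewrite iterS ord_predK.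
Qed.

Lemma iter_pred_ordS s j k : j <= k ->
  iter j (@ord_pred n) (iter k (@ordS n) s) = iter (k - j) (@ordS n) s.
Proof.
elim: j => [|j IH] jk; first by rewrite subn0.
rewrite iterS IH ?(ltnW jk) //.
have -> : k - j = (k - j.+1).+1 by lia.
by rewrite iterS ordSK.
Qed.

Lemma iter_pred_onto s t : exists2 k, k < n & iter k (@ord_pred n) s = t.
Proof.
case: (iter_ordS_onto t s) => k kn e; exists k => //.
by rewrite -e iter_pred_ordS // subnn.
Qed.

End CyclicOrder.

Section Contraction.

Variables (n : nat) (P : {set 'I_n}).
Hypothesis nzP : exists t, t \in P.

Lemma prevP_spec k :
  exists m, [/\ m < n, iter m (@ord_pred n) k \in P,
    (forall j, j < m -> iter j (@ord_pred n) k \notin P) &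
    prevP P k = iter m (@ord_pred n) k].
Proof.
have [t tP] := nzP.
have [|m [h1 h2 h3 h4]] :=
  @head_filter_iota _ k (fun m => iter m (@ord_pred n) k) (mem P) n.
  by have [m mn e] := iter_pred_onto k t; exists m; rewrite // e.
by exists m; split.
Qed.

Lemma nextP_spec s :
  exists m, [/\ m < n, iter m.+1 (@ordS n) s \in P,
    (forall j, j < m -> iter j.+1 (@ordS n) s \notin P) &
    nextP P s = iter m.+1 (@ordS n) s].
Proof.
have [t tP] := nzP.
have [|m [h1 h2 h3 h4]] :=
  @head_filter_iota _ s (fun m => iter m.+1 (@ordS n) s) (mem P) n.
  have [[|m] mn e] := iter_ordS_onto s t.
  - have n0 : 0 < n := leq_ltn_trans (leq0n _) (ltn_ord s).
    exists n.-1; first by rewrite prednK.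
    by rewrite prednK // iter_ordS_period; move: e => /= ->.
  - by exists m; rewrite ?e // ltnW.
by exists m; split.
Qed.

Lemma prevP_mem k : prevP P k \in P.
Proof. by have [m [_ ? _ ->]] := prevP_spec k. Qed.

Lemma nextP_mem s : nextP P s \in P.
Proof. by have [m [_ ? _ ->]] := nextP_spec s. Qed.

Lemma prevP_ord_pred t : t \notin P -> prevP P t = prevP P (ord_pred t).
Proof.
move=> tP; have [m [_ pm bm ->]] := prevP_spec t.
have [m' [_ pm' bm' ->]] := prevP_spec (ord_pred t).
rewrite -iterSr; congr iter.
apply: (least_index_unique (f := fun j => iter j (@ord_pred n) t) (p := mem P)) => //.
- by rewrite iterSr.
- by move=> [|j] // jm; rewrite iterSr; apply: bm'.
Qed.

Lemma nextP_prevP_pred t : t \in P -> nextP P (prevP P (ord_pred t)) = t.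
Proof.
move=> tP; have [m [_ pm bm ->]] := prevP_spec (ord_pred t).
have [m' [_ pm' bm' ->]] := nextP_spec (iter m (@ord_pred n) (ord_pred t)).
rewrite -iterSr in pm' bm' *.
suff -> : m' = m by rewrite iter_ordS_pred // subnn.
apply: (least_index_unique
  (f := fun j => iter j.+1 (@ordS n) (iter m.+1 (@ord_pred n) t)) (p := mem P)) => //.
- by rewrite iter_ordS_pred // subnn.
- move=> j jm; rewrite iter_ordS_pred; last lia.
  have -> : m.+1 - j.+1 = (m - j.+1).+1 by lia.
  by rewrite iterSr; apply: bm; lia.
Qed.

Lemma prevP_pred_nextP s : s \in P -> prevP P (ord_pred (nextP P s)) = s.
Proof.
move=> sP; have [m [_ pm bm ->]] := nextP_spec s.
rewrite iterS ordSK.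
have [m' [_ pm' bm' ->]] := prevP_spec (iter m (@ordS n) s).
suff -> : m' = m by rewrite iter_pred_ordS // subnn.
apply: (least_index_unique
  (f := fun j => iter j (@ord_pred n) (iter m (@ordS n) s)) (p := mem P)) => //.
- by rewrite iter_pred_ordS // subnn.
- move=> j jm; rewrite iter_pred_ordS; last lia.
  have -> : m - j = (m - j.+1).+1 by lia.
  by apply: bm; lia.
Qed.

Lemma nextP_neq s t : t \in P -> t != s -> nextP P s != s.
Proof.
move=> tP ts; have [m [_ _ bm ->]] := nextP_spec s.
have [[|k] kn e] := iter_ordS_onto s t; first by rewrite -e eqxx in ts.
have mk : m <= k by rewrite leqNgt; apply: contraL tP => /bm; rewrite e.
by apply: iter_ordS_neq; lia.
Qed.

End Contraction.

Lemma prevP_id n (P : {set 'I_n}) t : t \in P -> prevP P t = t.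
Proof.
move=> tP; have [[|m] [_ _ bm ->]] := prevP_spec (ex_intro _ t tP) t => //.
by have := bm 0 isT; rewrite tP.
Qed.

Lemma nextP_setT n (s : 'I_n) : nextP [set: 'I_n] s = ordS s.
Proof.
have [[|m] [_ _ bm ->]] := nextP_spec (ex_intro _ s (in_setT s)) s => //.
by have := bm 0 isT; rewrite inE.
Qed.

Lemma ord_pred_val n (w : 'I_n) :
  nat_of_ord (ord_pred w) = if w == 0 :> nat then n.-1 else w.-1.
Proof.
rewrite /=; have wn := ltn_ord w.
case: eqP => [->|w0]; first by rewrite add0n modn_small //; lia.
have -> : (w + n).-1 = w.-1 + n by lia.
by rewrite modnDr modn_small //; lia.
Qed.

Lemma between_neq (x w y : nat) : x != w -> w != y ->
  ((x < w < y) || (y < w < x)) = ~~ ((x < w) (+) (w < y)).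
Proof.
by case: (ltngtP x w) => // ? _; case: (ltngtP w y) => // ? _ /=; apply/idP; lia.
Qed.

Definition precedes_sides n (P : {set 'I_n}) (w : 'I_n) : bool :=
  [forall t in P, w < t].

Lemma precedes_sidesP n (P : {set 'I_n}) (w : 'I_n) :
  reflect (forall t, t \in P -> w < t) (precedes_sides P w).
Proof. exact: forall_inP. Qed.

Lemma set2_inj (T : finType) (x1 x2 y1 y2 : T) :
  [set x1; x2] = [set y1; y2] -> y1 != y2 ->
  (x1 = y1 /\ x2 = y2) \/ (x1 = y2 /\ x2 = y1).
Proof.
move=> E ne.
have /set2P[] : x1 \in [set y1; y2] by rewrite -E set21.
all: have /set2P[] : x2 \in [set y1; y2] by rewrite -E set22.
all: move=> e2 e1; subst x1 x2; try by [left | right].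
all: [> have : y2 \in [set y1; y1] by rewrite E set22
      | have : y1 \in [set y2; y2] by rewrite E set21].
all: by rewrite setUid => /set1P e; rewrite e eqxx in ne.
Qed.

Lemma leadstoE n (P : {set 'I_n}) (c : 'I_n * 'I_n) (a b : 'I_n) : a != b ->
  leadsto P c (a, b) =
  ((prevP P c.1 == a) && (prevP P c.2 == b)) || ((prevP P c.1 == b) && (prevP P c.2 == a)).
Proof.
move=> ab; rewrite /leadsto /=; apply/eqP/idP.
- by case/set2_inj/(_ ab) => -[-> ->]; rewrite !eqxx ?orbT.
- by case/orP => /andP[/eqP -> /eqP ->] //; rewrite setUC.
Qed.

Section ContractionOrder.

Variables (n : nat) (P : {set 'I_n}).
Hypothesis nzP : exists t, t \in P.

Lemma prevP_greatest_le (w t : 'I_n) : t \in P -> t <= w ->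
  prevP P w <= w /\ (forall u, u \in P -> u <= w -> u <= prevP P w).
Proof.
elim: {w}(nat_of_ord w) {-2}w (erefl (nat_of_ord w)) t => [|m IH] w e t tP tw.
  have -> : w = t by apply: val_inj => /=; lia.
  by rewrite prevP_id //; split => // u _; lia.
have [wP|wP] := boolP (w \in P); first by rewrite prevP_id.
have nzP' : exists u, u \in P by exists t.
have ep : nat_of_ord (ord_pred w) = m by rewrite ord_pred_val e.
have neq_w u : u \in P -> nat_of_ord u <> w by move=> uP /val_inj uw; rewrite -uw uP in wP.
rewrite (prevP_ord_pred nzP' wP).
have [le_m max_m] := IH (ord_pred w) ep t tP ltac:(have := neq_w t tP; lia).
split=> [|u uP uw]; first lia.
by apply: max_m => //; have := neq_w u uP; lia.
Qed.

Lemma prevP_precedes_sides (w : 'I_n) : precedes_sides P w ->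
  forall u, u \in P -> u <= prevP P w.
Proof.
elim: {w}(nat_of_ord w) {-2}w (erefl (nat_of_ord w)) => [|m IH] w e /precedes_sidesP wP u uP.
all: have w_notin : w \notin P by apply: contraTN isT => /wP; rewrite ltnn.
all: rewrite (prevP_ord_pred nzP w_notin).
  have [t tP] := nzP.
  have le_pred v : v \in P -> v <= ord_pred w.
    by move=> _; rewrite ord_pred_val e /=; have := ltn_ord v; lia.
  by have [_ ->] := prevP_greatest_le tP (le_pred t tP); last exact: le_pred.
apply: IH uP; first by rewrite ord_pred_val e.
by apply/precedes_sidesP => t tP; rewrite ord_pred_val e /=; have := wP t tP; lia.
Qed.

Lemma not_precedes_sides (w : 'I_n) : ~~ precedes_sides P w ->
  exists2 t, t \in P & t <= w.
Proof.
move/precedes_sidesP => wP.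
have [/exists_inP[t tP tw]|/exists_inPn le_w] := boolP [exists t in P, t <= w].
  by exists t.
by case: wP => t /le_w; rewrite -ltnNge.
Qed.

(* Contraction is monotone, except that the vertices preceding the first side
   of P are sent to the last one. *)
Lemma ltn_prevP (w w' : 'I_n) : prevP P w != prevP P w' ->
  (prevP P w < prevP P w') = (w < w') (+) precedes_sides P w (+) precedes_sides P w'.
Proof.
move=> ne; have iw := prevP_mem nzP w; have iw' := prevP_mem nzP w'.
have {}ne : nat_of_ord (prevP P w) <> prevP P w' by move/val_inj/eqP; apply/negP.
case rw: (precedes_sides P w); case rw': (precedes_sides P w').
- by have := prevP_precedes_sides rw iw'; have := prevP_precedes_sides rw' iw; lia.
- have [t tP tw'] := not_precedes_sides (negbT rw').
  have := (precedes_sidesP _ _ rw) t tP; have := prevP_precedes_sides rw iw'.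
  by rewrite /= addbF; lia.
- have [t tP tw] := not_precedes_sides (negbT rw).
  have := (precedes_sidesP _ _ rw') t tP; have := prevP_precedes_sides rw' iw.
  by rewrite /= addbF; lia.
- have [t tP tw] := not_precedes_sides (negbT rw).
  have [t' tP' tw'] := not_precedes_sides (negbT rw').
  have [le_w max_w] := prevP_greatest_le tP tw.
  have [le_w' max_w'] := prevP_greatest_le tP' tw'.
  rewrite !addbF; case: (ltnP w w') => h.
  + by have := max_w' _ iw; lia.
  + by have := max_w _ iw'; lia.
Qed.

Lemma between_prevP (k l w : 'I_n) : k < l ->
  prevP P k != prevP P l -> prevP P w != prevP P k -> prevP P w != prevP P l ->
  (k < w < l) =
  ((prevP P k < prevP P w < prevP P l) || (prevP P l < prevP P w < prevP P k))
    (+) (prevP P l < prevP P k).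
Proof.
move=> kl nkl nwk nwl.
have nkw : prevP P k != prevP P w by rewrite eq_sym.
have nlk : prevP P l != prevP P k by rewrite eq_sym.
rewrite between_neq // (ltn_prevP nkw) (ltn_prevP nwl) (ltn_prevP nlk).
rewrite (leq_gtF (ltnW kl)).
have : (k < w) || (w < l) by case: ltnP => //= wk; apply: leq_ltn_trans wk kl.
by case: (k < w); case: (w < l);
  case: (precedes_sides P k); case: (precedes_sides P l); case: (precedes_sides P w).
Qed.

Lemma between_leadsto (k l w a b : 'I_n) :
  k < l -> a < b -> leadsto P (k, l) (a, b) ->
  prevP P w != a -> prevP P w != b ->
  (k < w < l) = (a < prevP P w < b) (+) (prevP P l < prevP P k).
Proof.
move=> kl ab; have ab' : a != b by rewrite neq_ltn ab.
rewrite leadstoE //= => /orP[]/andP[/eqP ka /eqP lb] wa wb.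
all: rewrite (between_prevP kl) ?ka ?lb //; try by rewrite eq_sym.
all: have -> : (b < prevP P w < a) = false by apply/negP => /andP[]; lia.
all: by rewrite ?orbF.
Qed.

Lemma crosses_lift (c d c' d' : 'I_n * 'I_n) :
  c.1 < c.2 -> c'.1 < c'.2 -> d'.1 < d'.2 ->
  leadsto P c c' -> leadsto P d d' -> crosses c' d' -> crosses c d.
Proof.
case: c => k l; case: d => u v; case: c' => a b; case: d' => x y /=.
move=> kl ab xy Lc Ld /and5P[ax ay bx by_ cross'].
rewrite /= in ax ay bx by_ cross'.
have xy' : x != y by rewrite neq_ltn xy.
have /eqP Ld' := Ld; have /eqP Lc' := Lc; rewrite /= in Lc' Ld'.
have image_c s : s \in [:: k; l] -> prevP P s \in [set a; b].
  by rewrite -Lc' !inE => /orP[]/eqP ->; rewrite eqxx ?orbT.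
have image_d t : t \in [:: u; v] -> prevP P t \in [set x; y].
  by rewrite -Ld' !inE => /orP[]/eqP ->; rewrite eqxx ?orbT.
have off t : t \in [:: u; v] -> (prevP P t != a) && (prevP P t != b).
  by move/image_d/set2P=> [] ->; rewrite ?(eq_sym x) ?(eq_sym y); apply/andP.
have neq s t : s \in [:: k; l] -> t \in [:: u; v] -> s != t.
  move=> sc td; apply: contraTneq (image_c s sc) => ->.
  by rewrite !inE negb_or off.
have [ku lk] : k \in [:: k; l] /\ l \in [:: k; l] by rewrite !inE !eqxx orbT.
have [uu vu] : u \in [:: u; v] /\ v \in [:: u; v] by rewrite !inE !eqxx orbT.
have [/andP[ua ub] /andP[va vb]] := (off u uu, off v vu).
rewrite /crosses /= !neq //=.
rewrite (between_leadsto kl ab Lc ua ub) (between_leadsto kl ab Lc va vb).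
rewrite addbACA addbb addbF.
by have [[-> ->]|[-> ->]] := set2_inj Ld' xy'; rewrite // addbC.
Qed.

End ContractionOrder.

Local Open Scope ring_scope.

Lemma omegaE n (P : {set 'I_n}) (c : 'I_n * 'I_n) z :
  omega P c z = dlogdiff c.1 (nextP P c.2) z + dlogdiff (nextP P c.1) c.2 z
               - dlogdiff c.1 c.2 z - dlogdiff (nextP P c.1) (nextP P c.2) z.
Proof. by apply/ffunP => I; rewrite !ffunE. Qed.

Lemma dlogdiffC n (x y : 'I_n) z : dlogdiff x y z = dlogdiff y x z.
Proof.
apply/ffunP => I; rewrite !ffunE.
have e : (z y - z x)^-1 = - (z x - z y)^-1 by rewrite -invrN opprB.
case: (eqVneq I [set x]) => hx; case: (eqVneq I [set y]) => hy //.
- by have /set1P -> : x \in [set y] by rewrite -hy hx set11.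
- by rewrite e opprK.
Qed.

Lemma omega_setTC n (x y : 'I_n) z :
  omega [set: 'I_n] (y, x) z = omega [set: 'I_n] (x, y) z.
Proof.
rewrite !omegaE /= !nextP_setT.
rewrite (dlogdiffC y (ordS x)) (dlogdiffC (ordS y) x) (dlogdiffC y x).
by rewrite (dlogdiffC (ordS y) (ordS x)) [dlogdiff (ordS x) y z + _]addrC.
Qed.

(* The vertices l with prevP P l = b are b, ordS b, ..., up to the
   predecessor of nextP P b. *)
Lemma telescope_prevP n (P : {set 'I_n}) (V : zmodType) (g : 'I_n -> V) b t :
  b \in P -> t \in P -> t != b ->
  \sum_(l | prevP P l == b) (g (ordS l) - g l) = g (nextP P b) - g b.
Proof.
move=> bP tP tb; have nzP : exists u, u \in P by exists b.
set nb := nextP P b; have nbP : nb \in P := nextP_mem nzP b.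
have nbb : nb != b := nextP_neq nzP tP tb.
have prevP_pred j : (prevP P (ord_pred j) == b) = (prevP P j == b) && (j != b) || (j == nb).
  have [jP|jP] := boolP (j \in P).
  - rewrite (prevP_id jP) andbN /=; apply/eqP/eqP => [e|->].
      by rewrite /nb -e nextP_prevP_pred.
    exact: prevP_pred_nextP.
  - have jb : j != b by apply: contraNneq jP => ->.
    have jn : j != nb by apply: contraNneq jP => ->.
    by rewrite -(prevP_ord_pred nzP jP) jb (negbTE jn) andbT orbF.
rewrite sumrB (reindex (@ord_pred n)) /=; last exact: onW_bij (ord_pred_bij n).
under eq_bigr do rewrite ord_predK.
rewrite (eq_bigl _ _ prevP_pred) (bigD1 nb) /= ?eqxx ?orbT //.
rewrite [X in _ - X](bigD1 b) /= ?prevP_id ?eqxx //.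
rewrite (eq_bigl (fun j => (prevP P j == b) && (j != b))); last first.
  move=> j; case: (eqVneq j nb) => [->|_]; last by rewrite orbF andbT.
  by rewrite prevP_id // (negbTE nbb) andbF.
by rewrite opprD addrACA subrr addr0.
Qed.

Lemma ordS_neq_prevP n (P : {set 'I_n}) (x y : 'I_n) : (exists t, t \in P) ->
  prevP P y != prevP P x -> prevP P y != nextP P (prevP P x) -> y != ordS x.
Proof.
move=> nzP h1 h2; apply/eqP => e; subst y.
have [yP|yP] := boolP (ordS x \in P).
- by move: h2; rewrite (prevP_id yP) -{1}(nextP_prevP_pred nzP yP) ordSK eqxx.
- by move: h1; rewrite (prevP_ord_pred nzP yP) ordSK eqxx.
Qed.

Lemma isChord_setT_leadsto n (P : {set 'I_n}) (x y a b : 'I_n) :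
  (exists t, t \in P) -> prevP P x = a -> prevP P y = b ->
  a != b -> b != nextP P a -> a != nextP P b ->
  isChord [set: 'I_n] (x, y) = (x < y)%N.
Proof.
move=> nzP hx hy ab nba nab.
rewrite /isChord /= !nextP_setT !in_setT /=.
have yx : y != ordS x by apply: (ordS_neq_prevP nzP); rewrite hx hy // eq_sym.
have xy : x != ordS y by apply: (ordS_neq_prevP nzP); rewrite hx hy.
by rewrite yx xy !andbT.
Qed.

Lemma sum_leadsto_chords n (P : {set 'I_n}) (V : zmodType) (F : 'I_n * 'I_n -> V)
    (a b : 'I_n) :
  (forall x y, F (x, y) = F (y, x)) -> isChord P (a, b) ->
  \sum_(c | isChord setT c && leadsto P c (a, b)) F c =
  \sum_(x | prevP P x == a) \sum_(y | prevP P y == b) F (x, y).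
Proof.
move=> Fsym /and5P[/= aP _ ab nba nab].
have nzP : exists t, t \in P by exists a.
have ab' : a != b by rewrite neq_ltn ab.
pose A (c : 'I_n * 'I_n) := (prevP P c.1 == a) && (prevP P c.2 == b).
pose B (c : 'I_n * 'I_n) := (prevP P c.1 == b) && (prevP P c.2 == a).
have chordA c : A c -> isChord setT c = (c.1 < c.2)%N.
  by case: c => x y /andP[/eqP hx /eqP hy]; apply: isChord_setT_leadsto hx hy _ _ _.
have chordB c : B c -> isChord setT c = (c.1 < c.2)%N.
  case: c => x y /andP[/eqP hx /eqP hy].
  by apply: isChord_setT_leadsto hx hy _ _ _; rewrite // eq_sym.
have notAB c : A c -> B c = false.
  by rewrite /B => /andP[/eqP -> _]; rewrite (negbTE ab').
rewrite (bigID A) /=.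
rewrite (eq_bigl (fun c => A c && (c.1 < c.2)%N)); last first.
  move=> c; rewrite leadstoE // -/(A c) -/(B c).
  have [Ac|_] := boolP (A c); last by rewrite !andbF.
  by rewrite chordA //= !andbT.
rewrite [X in _ + X](eq_bigl (fun c => B c && (c.1 < c.2)%N)); last first.
  move=> c; rewrite leadstoE // -/(A c) -/(B c).
  have [Ac|_] := boolP (A c); first by rewrite notAB ?andbF.
  have [Bc|_] := boolP (B c); last by rewrite /= andbF.
  by rewrite chordB //= !andbT.
rewrite pair_big_dep [RHS](bigID (fun c : 'I_n * 'I_n => (c.1 < c.2)%N)) /=.
congr (_ + _); first by apply: eq_bigr => -[].
rewrite (reindex (fun c : 'I_n * 'I_n => (c.2, c.1))) /=; last first.
  by apply: onW_bij; exists (fun c : 'I_n * 'I_n => (c.2, c.1)); case.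
apply: eq_big => [[x y]|[x y] _] /=; last exact: Fsym.
rewrite /B /= [(prevP P y == b) && _]andbC.
case: (ltngtP x y) => [_|_|/val_inj <-]; rewrite ?andbT ?andbF //.
by case: eqP => // ->; rewrite (negbTE ab').
Qed.

Lemma sum_omega_setT_prevP n (P : {set 'I_n}) (a b : 'I_n) z :
  a \in P -> b \in P -> a != b ->
  \sum_(x | prevP P x == a) \sum_(y | prevP P y == b) omega [set: 'I_n] (x, y) z =
  omega P (a, b) z.
Proof.
move=> aP bP ab.
have reorder (V : zmodType) (u v w t : V) : u + v - w - t = (u - w) - (t - v).
  by rewrite opprB addrA -[u + v - w]addrA [v - w]addrC addrA.
pose h x := dlogdiff x (nextP P b) z - dlogdiff x b z.
have inner x : \sum_(y | prevP P y == b) omega [set: 'I_n] (x, y) z = h x - h (ordS x).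
  under eq_bigr do rewrite omegaE /= !nextP_setT reorder.
  by rewrite sumrB (telescope_prevP (fun y => dlogdiff x y z) bP aP ab)
    (telescope_prevP (fun y => dlogdiff (ordS x) y z) bP aP ab).
under eq_bigr do rewrite inner.
rewrite (eq_bigr (fun x => (- h (ordS x)) - (- h x))); last by move=> x _; rewrite opprK addrC.
have ba : b != a by rewrite eq_sym.
by rewrite (telescope_prevP (fun x => - h x) aP bP ba) opprK omegaE /= reorder addrC.
Qed.

Lemma omega_pullback n (P : {set 'I_n}) (c' : 'I_n * 'I_n) z : isChord P c' ->
  omega P c' z =
  \sum_(c : 'I_n * 'I_n | isChord setT c && leadsto P c c') omega setT c z.
Proof.
case: c' => a b chord_ab; have /and5P[/= aP bP ab _ _] := chord_ab.
rewrite (sum_leadsto_chords (F := fun c => omega setT c z) _ chord_ab) => [|x y].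
  by rewrite sum_omega_setT_prevP // neq_ltn ab.
by rewrite omega_setTC.
Qed.

Definition one_form n (a : ext n) : Prop :=
  forall J : {set 'I_n}, (forall i, J != [set i]) -> a J = 0.

Lemma omega_one_form n (P : {set 'I_n}) c z : one_form (omega P c z).
Proof. by move=> J h; rewrite !ffunE !(negbTE (h _)) !subr0 addr0. Qed.

Lemma one_formE n (a : ext n) J : one_form a ->
  a J = \sum_(i : 'I_n) (J == [set i])%:R * a [set i].
Proof.
move=> ha; case: (pickP (fun i => J == [set i])) => [i /eqP ->|h].
- rewrite (bigD1 i) //= eqxx mul1r big1 ?addr0 // => j ji.
  by rewrite (inj_eq set1_inj) eq_sym (negbTE ji) mul0r.
- by rewrite ha ?big1 // => i; rewrite h // mul0r.
Qed.

Definition wedge_sign n (i : 'I_n) (I : {set 'I_n}) : CC :=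
  (-1) ^+ ninv [set i] (I :\ i).

Lemma wedge_one_formE n (a m : ext n) I : one_form a ->
  wedge a m I = \sum_(i in I) wedge_sign i I * a [set i] * m (I :\ i).
Proof.
move=> ha; rewrite ffunE.
under eq_bigr do rewrite (one_formE _ ha) mulr_sumr mulr_suml.
rewrite exchange_big /= [RHS]big_mkcond /=; apply: eq_bigr => i _.
rewrite (eq_bigr (fun J => if J == [set i] then
   (-1) ^+ ninv J (I :\: J) * a [set i] * m (I :\: J) else 0)); last first.
  by move=> J _; case: eqP; rewrite ?mul1r ?mul0r ?mulr0 ?mul0r.
rewrite -big_mkcondr /=.
have [iI|iI] := boolP (i \in I).
- rewrite (eq_bigl (pred1 [set i])) ?big_pred1_eq // => J.
  by rewrite /= andbC; case: eqP => // ->; rewrite sub1set.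
- rewrite big_pred0 // => J.
  by rewrite andbC; case: eqP => // ->; rewrite sub1set (negbTE iI).
Qed.

Lemma ninv_set1 n (i : 'I_n) (K : {set 'I_n}) :
  ninv [set i] K = #|[set k in K | (k < i)%N]|.
Proof.
have inj : injective (pair i : 'I_n -> 'I_n * 'I_n) by move=> x y [].
rewrite /ninv -(card_imset _ inj); apply: eq_card => -[x y]; rewrite [LHS]inE /=.
rewrite in_set1; apply/idP/imsetP => [/andP[/andP[/eqP -> yK] yx]|[k]].
  by exists y => //; rewrite inE yK.
by rewrite inE => /andP[kK ki] [-> ->]; rewrite eqxx kK ki.
Qed.

Lemma card_lt_setD1 n (i j : 'I_n) (K : {set 'I_n}) :
  #|[set k in K | (k < i)%N]| =
  ((j \in K) && (j < i)%N + #|[set k in K :\ j | (k < i)%N]|)%N.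
Proof.
rewrite (cardsD1 j [set k in K | (k < i)%N]) inE; congr (_ + _)%N.
by apply: eq_card => k; rewrite !inE andbA.
Qed.

Lemma wedge_signE n (i : 'I_n) (I : {set 'I_n}) :
  wedge_sign i I = (-1) ^+ #|[set k in I | (k < i)%N]|.
Proof. by rewrite /wedge_sign ninv_set1 (card_lt_setD1 i i I) ltnn andbF. Qed.

Lemma wedge_sign_swap n (i j : 'I_n) (I : {set 'I_n}) :
  i \in I -> j \in I -> i != j ->
  wedge_sign i I * wedge_sign j (I :\ i) = - (wedge_sign j I * wedge_sign i (I :\ j)).
Proof.
move=> iI jI ij; rewrite !wedge_signE (card_lt_setD1 i j I) (card_lt_setD1 j i I) iI jI /=.
have [ji|ij'] := ltnP j i.
- by rewrite (leq_gtF (ltnW ji)) !exprD /=; ring.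
- have {}ij' : (i < j)%N by rewrite ltn_neqAle ij' andbT.
  by rewrite ij' !exprD /=; ring.
Qed.

Lemma big_mkcond_nested n (A : pred 'I_n) (B : 'I_n -> pred 'I_n) (F : 'I_n -> 'I_n -> CC) :
  \sum_(i | A i) \sum_(j | B i j) F i j =
  \sum_(i : 'I_n) \sum_(j : 'I_n) (if A i && B i j then F i j else 0).
Proof.
rewrite big_mkcond; apply: eq_bigr => i _; case: (A i) => /=.
  by rewrite big_mkcond.
by rewrite big1.
Qed.

Lemma wedge_anticomm n (a b m : ext n) : one_form a -> one_form b ->
  wedge a (wedge b m) = - wedge b (wedge a m).
Proof.
move=> ha hb; apply/ffunP => I; rewrite [RHS]ffunE !wedge_one_formE //.
under eq_bigr do rewrite wedge_one_formE // mulr_sumr.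
under [X in _ = - X]eq_bigr do rewrite wedge_one_formE // mulr_sumr.
rewrite big_mkcond_nested [X in _ = - X]big_mkcond_nested.
rewrite [X in _ = - X]exchange_big /= -sumrN.
apply: eq_bigr => i _; rewrite -sumrN; apply: eq_bigr => j _.
rewrite !inE; case: (eqVneq j i) => [->|ji]; first by rewrite !andbF oppr0.
have ij : i != j by rewrite eq_sym.
have [iI|] := boolP (i \in I); have [jI|] := boolP (j \in I).
all: rewrite /= ?oppr0 //.
rewrite [I :\ j :\ i]setDDl setUC -setDDl.
transitivity ((wedge_sign i I * wedge_sign j (I :\ i)) *
              (a [set i] * b [set j] * m (I :\ i :\ j))); first by ring.
by rewrite wedge_sign_swap //; ring.
Qed.

Lemma wedgeDl n (a1 a2 m : ext n) : wedge (a1 + a2) m = wedge a1 m + wedge a2 m.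
Proof.
apply/ffunP => I; rewrite !ffunE -big_split /=; apply: eq_bigr => J _.
by rewrite ffunE mulrDr mulrDl.
Qed.

Lemma wedgeDr n (a m1 m2 : ext n) : wedge a (m1 + m2) = wedge a m1 + wedge a m2.
Proof.
apply/ffunP => I; rewrite !ffunE -big_split /=; apply: eq_bigr => J _.
by rewrite ffunE mulrDr.
Qed.

Lemma wedge0l n (m : ext n) : wedge 0 m = 0.
Proof. by apply/ffunP => I; rewrite !ffunE big1 // => J _; rewrite ffunE mulr0 mul0r. Qed.

Lemma wedge0r n (a : ext n) : wedge a 0 = 0.
Proof. by apply/ffunP => I; rewrite !ffunE big1 // => J _; rewrite ffunE mulr0. Qed.

Lemma wedge_suml n (T : Type) (r : seq T) (F : T -> ext n) (m : ext n) :
  wedge (\sum_(i <- r) F i) m = \sum_(i <- r) wedge (F i) m.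
Proof. exact: (big_morph (fun a => wedge a m) (fun a b => wedgeDl a b m) (wedge0l m)). Qed.

Lemma wedge_sumr n (T : Type) (r : seq T) (F : T -> ext n) (a : ext n) :
  wedge a (\sum_(i <- r) F i) = \sum_(i <- r) wedge a (F i).
Proof. exact: (big_morph (wedge a) (wedgeDr a) (wedge0r a)). Qed.

Lemma ext_eq_opp0 n (w : ext n) : w = - w -> w = 0.
Proof.
move=> ww; apply/ffunP => I; rewrite ffunE; apply/eqP.
have /eqP := congr1 (fun f : ext n => f I) ww; rewrite /= ffunE.
by rewrite -subr_eq0 opprK -mulr2n mulrn_eq0.
Qed.

Lemma wedge_self n (a m : ext n) : one_form a -> wedge a (wedge a m) = 0.
Proof. by move=> ha; apply/ext_eq_opp0/wedge_anticomm. Qed.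

Lemma monomial_cat n (P : {set 'I_n}) l1 l2 z :
  monomial P (l1 ++ l2) z =
  foldr (fun c m => wedge (omega P c z) m) (monomial P l2 z) l1.
Proof. by elim: l1 => //= c l1 <-. Qed.

Lemma wedge_repeated n (P : {set 'I_n}) c z l (m : ext n) :
  wedge (omega P c z)
    (foldr (fun d m => wedge (omega P d z) m) (wedge (omega P c z) m) l) = 0.
Proof.
elim: l => [|d l IH] /=; first exact/wedge_self/omega_one_form.
by rewrite (wedge_anticomm _ (omega_one_form P c z) (omega_one_form P d z)) IH wedge0r oppr0.
Qed.

Lemma monomial_not_uniq n (P : {set 'I_n}) cs z : ~~ uniq cs -> monomial P cs z = 0.
Proof.
elim: cs => [|c cs IH] //=; rewrite negb_and negbK => /orP[/splitPr[l1 l2]|/IH].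
  by rewrite /form_wedge monomial_cat; apply: wedge_repeated.
by rewrite /form_wedge => ->; rewrite wedge0r.
Qed.

Definition contract n (P : {set 'I_n}) (c : 'I_n * 'I_n) : 'I_n * 'I_n :=
  if (prevP P c.1 < prevP P c.2)%N then (prevP P c.1, prevP P c.2)
  else (prevP P c.2, prevP P c.1).

Lemma leadsto_contract n (P : {set 'I_n}) (c c' : 'I_n * 'I_n) : (c'.1 < c'.2)%N ->
  leadsto P c c' = (contract P c == c').
Proof.
case: c' => a b /= ab; apply/idP/eqP => [/eqP/set2_inj|<-].
  rewrite neq_ltn ab /contract => /(_ isT) [[-> ->]|[-> ->]]; first by rewrite ab.
  by rewrite ltnNge ltnW.
by rewrite /leadsto /contract; case: ifP => _; rewrite //= setUC.
Qed.

Lemma isChord_lt n (P : {set 'I_n}) c : isChord P c -> (c.1 < c.2)%N.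
Proof. by case/and5P. Qed.

Definition chord_lifts n (P : {set 'I_n}) (c' : 'I_n * 'I_n) : seq ('I_n * 'I_n) :=
  [seq c <- index_enum ('I_n * 'I_n)%type | isChord setT c && leadsto P c c'].

Definition monomial_lifts n (P : {set 'I_n}) (cs : seq ('I_n * 'I_n)) :
    seq (seq ('I_n * 'I_n)) :=
  foldr (fun c' L => [seq d :: ds | d <- chord_lifts P c', ds <- L]) [:: [::]] cs.

Lemma monomial_pullback n (P : {set 'I_n}) cs z : all (isChord P) cs ->
  monomial P cs z = \sum_(ds <- monomial_lifts P cs) monomial setT ds z.
Proof.
elim: cs => [|c cs IH] /=; first by rewrite big_seq1.
case/andP=> chord_c chord_cs; rewrite /form_wedge IH // omega_pullback //.
rewrite -[X in wedge X _]big_filter wedge_suml big_allpairs_dep /=.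
by apply: eq_bigr => d _; rewrite wedge_sumr.
Qed.

Lemma monomial_liftsP n (P : {set 'I_n}) cs ds : all (isChord P) cs ->
  ds \in monomial_lifts P cs -> all (isChord setT) ds /\ map (contract P) ds = cs.
Proof.
elim: cs ds => [|c cs IH] ds /=; first by rewrite inE => _ /eqP ->.
case/andP=> chord_c /IH{}IH /allpairsPdep[d [ds' [d_lift /IH[chords <-] ->]]] /=.
move: d_lift; rewrite mem_filter => /andP[/andP[-> leads] _].
by rewrite chords (leadsto_contract _ _ (isChord_lt chord_c)) in leads *; move/eqP: leads => ->.
Qed.

Lemma nresidual_lift n (P : {set 'I_n}) cs ds :
  all (isChord P) cs -> uniq cs -> ds \in monomial_lifts P cs ->
  all (isChord setT) ds /\ (nresidual ds <= nresidual cs)%N.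
Proof.
move=> chord_cs uniq_cs ds_lift; have [chord_ds map_ds] := monomial_liftsP chord_cs ds_lift.
have uniq_ds : uniq ds by apply: (map_uniq (f := contract P)); rewrite map_ds.
have image_chord e : e \in ds -> isChord P (contract P e).
  by move=> e_ds; apply: (allP chord_cs); rewrite -map_ds map_f.
have leads e : e \in ds -> leadsto P e (contract P e).
  by move=> e_ds; rewrite leadsto_contract ?eqxx //; apply/isChord_lt/image_chord.
split=> //; rewrite /nresidual !undup_id // -map_ds count_map.
rewrite (@eq_in_count _ _ (fun d => (d \in ds) && ~~ has (crosses d) ds)) => [|d -> //].
apply: sub_count => d /andP[d_ds] /=; apply: contra => /hasP[_ /mapP[d2 d2_ds ->] cross2].
apply/hasP; exists d2 => //.
have nzP : exists t, t \in P by case/and5P: (image_chord d d_ds) => tP _ _ _ _; exists (contract P d).1.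
apply: (crosses_lift nzP _ _ _ (leads d d_ds) (leads d2 d2_ds) cross2).
all: exact/isChord_lt/image_chord || exact/isChord_lt/(allP chord_ds).
Qed.

Lemma In_mem (T : eqType) (x : T) (s : seq T) : List.In x s -> x \in s.
Proof. by elim: s => //= y s IH [->|/IH]; rewrite in_cons ?eqxx // => ->; rewrite orbT. Qed.

Lemma in_Qspan_trans n (M N : dform n -> Prop) (x : dform n) :
  (forall m, M m -> in_Qspan N m) -> in_Qspan M x -> in_Qspan N x.
Proof.
move=> MN [l [lM xE]].
suff [l' [l'N E]] : exists l' : seq (rat * dform n),
    (forall p, List.In p l' -> N p.2) /\
    forall z, injective z -> forall I,
      \sum_(p <- l) ratr p.1 * p.2 z I = \sum_(p <- l') ratr p.1 * p.2 z I.
  by exists l'; split=> // z zi; rewrite xE //; apply/ffunP => I; rewrite !ffunE E.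
elim: l lM {xE} => [|[q m] l IH] lM; first by exists [::].
have [l1 [l1N E1]] := IH (fun p lp => lM p (or_intror lp)).
have [lm [lmN Em]] := MN m (lM _ (or_introl erefl)).
exists ([seq (q * p.1, p.2) | p <- lm] ++ l1); split.
  move=> p /(List.in_app_or _ _ _)[/(List.in_map_iff _ _ _)[p' [<- /lmN]] //|/l1N //].
move=> z zi I; rewrite big_cons big_cat big_map /= E1 // (Em z zi) ffunE mulr_sumr.
by congr (_ + _); apply: eq_bigr => p _; rewrite rmorphM mulrA.
Qed.

Lemma resmonom_in_Qspan n (P : {set 'I_n}) r m :
  resmonom P r m -> in_Qspan (resmonom setT r) m.
Proof.
case=> cs [chord_cs res_cs ->]; have [uniq_cs|not_uniq] := boolP (uniq cs); last first.
  by exists [::]; split=> // z _; rewrite monomial_not_uniq //; apply/ffunP => I; rewrite !ffunE big_nil.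
exists [seq (1%R, monomial setT ds) | ds <- monomial_lifts P cs]; split.
  move=> _ /(List.in_map_iff _ _ _)[ds [<- /In_mem ds_lift]].
  have [chord_ds res_ds] := nresidual_lift chord_cs uniq_cs ds_lift.
  by exists ds; split=> //; apply: leq_trans res_cs.
move=> z _; rewrite (monomial_pullback z chord_cs); apply/ffunP => I.
by rewrite !ffunE big_map sum_ffunE; apply: eq_bigr => ds _; rewrite rmorph1 mul1r.
Qed.

Theorem lemma4 (n : nat) (S' : {set 'I_n}) (hS' : (3 <= #|S'|)%N) :
  (forall c' : 'I_n * 'I_n, isChord S' c' ->
     forall z : 'I_n -> CC, injective z ->
       omega S' c' z =
       \sum_(c : 'I_n * 'I_n | isChord setT c && leadsto S' c c') omega setT c z)
  /\
  (forall (r : nat) (x : dform n),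
     in_Qspan (resmonom S' r) x -> in_Qspan (resmonom setT r) x).
Proof.
split=> [c' chord_c' z _ | r x]; first exact: omega_pullback.
exact/in_Qspan_trans/resmonom_in_Qspan.
Qed.
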